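(* Let $d\geq 2$ and let $\varGamma$ be a lattice in $\mathbb{R}^d$ such that $\langle x,x\rangle\in\mathbb{Q}$ for all $x\in\varGamma$, where $\langle\cdot,\cdot\rangle$ is the standard scalar product on $\mathbb{R}^d$. If $d$ is even, then $\operatorname{SOS}(\varGamma)/\operatorname{SOC}(\varGamma)$ is an elementary Abelian $2$-group. If $d$ is odd, then $\operatorname{SOS}(\varGamma)=\operatorname{SOC}(\varGamma)$. In either case, $R^2\in\operatorname{SOC}(\varGamma)$ for every $R\in\operatorname{SOS}(\varGamma)$.
   Context: A lattice in $\mathbb{R}^d$ is a subgroup of the form $\mathbb{Z}b_1\oplus\cdots\oplus\mathbb{Z}b_d$ where $\{b_1,\dots,b_d\}$ is a basis of $\mathbb{R}^d$. Two lattices $\varGamma,\varGamma'$ are commensurate, written $\varGamma\sim\varGamma'$, if $\varGamma\cap\varGamma'$ has finite index both in $\varGamma$ and in $\varGamma'$. $\operatorname{SOC}(\varGamma)=\{R\in\operatorname{SO}(d):\varGamma\sim R\varGamma\}$ and $\operatorname{SOS}(\varGamma)=\{R\in\operatorname{SO}(d):\varGamma\sim\alpha R\varGamma\text{ for some }\alpha>0\}$; these are groups and $\operatorname{SOC}(\varGamma)$ is a normal subgroup of $\operatorname{SOS}(\varGamma)$. An elementary Abelian $2$-group is a direct sum of cyclic groups of order $2$ (possibly trivial). *)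

From HB Require Import structures.
From mathcomp Require Import all_boot all_order all_algebra.
From mathcomp Require Import classical_sets reals.
Set Implicit Arguments. Unset Strict Implicit. Unset Printing Implicit Defensive.
Import Order.TTheory GRing.Theory Num.Theory.
Local Open Scope ring_scope.
Local Open Scope classical_set_scope.

Section Lattices.
Variables (R : realType) (d : nat).

Definition lattice_of (B : 'M[R]_d) : set 'cV[R]_d :=
  [set x | exists z : 'cV[int]_d, x = B *m map_mx (fun k : int => k%:~R) z].

Definition is_lattice (G : set 'cV[R]_d) : Prop :=
  exists B : 'M[R]_d, B \in unitmx /\ G = lattice_of B.

Definition finite_index (H G : set 'cV[R]_d) : Prop :=
  exists s : seq 'cV[R]_d, forall x, G x -> exists2 y, y \in s & H (x - y).

Definition commensurate (G G' : set 'cV[R]_d) : Prop :=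
  finite_index (G `&` G') G /\ finite_index (G `&` G') G'.

Definition is_SO (A : 'M[R]_d) : Prop := A^T *m A = 1%:M /\ \det A = 1.

Definition SOC (G : set 'cV[R]_d) : set 'M[R]_d :=
  [set A | is_SO A /\ commensurate G ((fun x => A *m x) @` G)].

Definition SOS (G : set 'cV[R]_d) : set 'M[R]_d :=
  [set A | is_SO A /\ exists2 a : R, 0 < a &
      commensurate G ((fun x => a *: (A *m x)) @` G)].

Definition rational_norms (G : set 'cV[R]_d) : Prop :=
  forall x, G x -> exists q : rat, (x^T *m x) 0 0 = ratr q.

(* The quotient group H/N (N normal in H) is an elementary Abelian 2-group,
   i.e. it is abelian and every element has order dividing 2. *)
Definition quot_elem_abelian2 (N H : set 'M[R]_d) : Prop :=
  forall A B, H A -> H B ->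
    N (A *m B *m invmx A *m invmx B) /\ N (A *m A).

End Lattices.

From HB Require Import structures.
From mathcomp Require Import all_boot all_order all_algebra.
From mathcomp Require Import boolp classical_sets reals ring.
Import Order.TTheory GRing.Theory Num.Theory.
Set Implicit Arguments. Unset Strict Implicit. Unset Printing Implicit Defensive.
Local Open Scope ring_scope.
Local Open Scope classical_set_scope.

(* Write G = B Z^d.  For invertible L the lattice L G = (L B) Z^d is commensurate
   with G iff B^-1 L B is rational: a common denominator m gives m L G <= G, and
   conversely, by pigeonhole, finite index puts a nonzero integer multiple of each
   column of L B into G.  Hence A is in SOC(G) iff B^-1 A B is rational, and in
   SOS(G) iff B^-1 (a A) B is rational for some a > 0.  Comparing the rational
   squared norms of a lattice vector x and of a multiple of a A x (A orthogonal)
   shows that a^2 is rational.  So A^2 = (a A)^2 / a^2 lies in SOC(G), the scalars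
   cancel in commutators, and for odd d, a = det (a A) / (a^2)^((d-1)/2) is
   rational. *)

Lemma finite_pigeonhole (V : zmodType) (H : set V) (s : seq V) (x : nat -> V) :
    (forall a b, H a -> H b -> H (a - b)) ->
    (forall k, exists2 y, y \in s & H (x k - y)) ->
  exists k1 k2 : nat, k1 <> k2 /\ H (x k1 - x k2).
Proof.
move=> Hsub Hx.
have Hx' k : exists y, y \in s /\ H (x k - y) by case: (Hx k) => y; exists y.
have [f Hf] := fin_all_exists (fun k : 'I_(size s).+1 => Hx' k).
pose g (k : 'I_(size s).+1) : 'I_(size s) :=
  Ordinal (etrans (index_mem _ _) (proj1 (Hf k))).
have /injectivePn [k1 [k2 ne_k /(congr1 val) /= eq_g]] : ~~ injectiveb g.
  by apply/negP => /injectiveP /leq_card; rewrite !card_ord ltnn.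
exists k1, k2; split; first by move=> /val_inj eq_k; rewrite eq_k eqxx in ne_k.
have eq_f : f k1 = f k2.
  by rewrite -(nth_index 0 (proj1 (Hf k1))) eq_g nth_index //; case: (Hf k2).
have -> : x k1 - x k2 = (x k1 - f k1) - (x k2 - f k2) by rewrite eq_f opprB addrA subrK.
by apply: Hsub; [case: (Hf k1) | case: (Hf k2)].
Qed.

Section Lattice.
Variables (R : realType) (d : nat).
Implicit Types (B L : 'M[R]_d) (x : 'cV[R]_d).
Local Notation intmx := (map_mx (fun k : int => (k%:~R : R))).

Lemma map_intmxZ m n (c : int) (a : 'M[int]_(m, n)) : intmx (c *: a) = c%:~R *: intmx a.
Proof. by apply/matrixP => i j; rewrite !mxE intrM. Qed.

Lemma lattice_ofB B x y : lattice_of B x -> lattice_of B y -> lattice_of B (x - y).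
Proof. by move=> [zx ->] [zy ->]; exists (zx - zy); rewrite map_mxB mulmxBr. Qed.

Lemma lattice_of_natZ B (n : nat) x : lattice_of B x -> lattice_of B (n%:R *: x).
Proof. by move=> [z ->]; exists (n%:Z *: z); rewrite map_intmxZ scalemxAr. Qed.

Lemma lattice_of_delta B j : lattice_of B (B *m delta_mx j 0).
Proof.
by exists (delta_mx j 0); congr (_ *m _); apply/matrixP => i k; rewrite !mxE; case: (_ && _).
Qed.

Lemma lattice_of_image B L : (fun x => L *m x) @` lattice_of B = lattice_of (L *m B).
Proof.
apply/seteqP; split => x.
  by move=> [y [z ->] <-]; exists z; rewrite mulmxA.
by move=> [z ->]; exists (B *m intmx z); [exists z | rewrite mulmxA].
Qed.

(* The cosets are represented by the vectors B r with 0 <= r_i < m. *)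
Lemma finite_index_lattice_of B (H : set 'cV[R]_d) (m : nat) : (0 < m)%N ->
  (forall x, lattice_of B x -> H (m%:R *: x)) -> finite_index H (lattice_of B).
Proof.
case: m => // m _ Hm.
exists [seq B *m intmx (\col_i (f i : nat)%:Z) | f : {ffun 'I_d -> 'I_m.+1}].
move=> _ [z ->].
pose r := \col_i modz (z i 0) m.+1; pose q := \col_i divz (z i 0) m.+1.
exists (B *m intmx r).
  apply/mapP; exists [ffun i => inord `|modz (z i 0) m.+1|]; first by rewrite mem_enum.
  congr (_ *m _); apply/matrixP => i j; rewrite !mxE ffunE inordK.
    by rewrite gez0_abs ?modz_ge0.
  by rewrite -ltz_nat gez0_abs ?modz_ge0 // ltz_pmod.
have zr : z - r = m.+1%:Z *: q.
  apply/matrixP => i j; rewrite !mxE (ord1 j) {1}(divz_eq (z i 0) m.+1).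
  by rewrite addrK mulrC.
rewrite -mulmxBr -map_mxB -/r [z - r]zr map_intmxZ -scalemxAr; apply: Hm.
by exists q.
Qed.

Lemma finite_index_intZ (H G : set 'cV[R]_d) x :
    (forall a b, H a -> H b -> H (a - b)) -> finite_index H G ->
    (forall n : nat, G (n%:R *: x)) ->
  exists2 n : int, n != 0 & H (n%:~R *: x).
Proof.
move=> Hsub [s Hs] Gx.
have [k1 [k2 [ne_k]]] := finite_pigeonhole Hsub (fun k => Hs _ (Gx k)).
exists (k1%:Z - k2%:Z); first by rewrite subr_eq0 eqz_nat; apply/eqP.
by rewrite intrB scalerBl.
Qed.

End Lattice.

Lemma rat_mx_of_col_multiples (F : numFieldType) m n (M : 'M[F]_(m, n)) :
    (forall j, exists2 c : int, c != 0 &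
       exists w : 'cV[int]_m, c%:~R *: col j M = map_mx (fun k : int => k%:~R) w) ->
  exists Q : 'M[rat]_(m, n), M = map_mx ratr Q.
Proof.
move=> Hcol.
have Hcw j : exists cw : int * 'cV[int]_m, cw.1 != 0 /\
    cw.1%:~R *: col j M = map_mx (fun k : int => k%:~R) cw.2.
  by have [c c0 [w Hw]] := Hcol j; exists (c, w).
have {Hcw} [cw Hcw] := fin_all_exists Hcw.
exists (\matrix_(i, j) (((cw j).2 i 0)%:~R / ((cw j).1)%:~R)).
apply/matrixP => i j; rewrite !mxE; have [c0 /matrixP /(_ i 0)] := Hcw j.
rewrite !mxE => Hw; rewrite rmorphM /= fmorphV /= !ratr_int -Hw.
by rewrite mulrC mulKf // intr_eq0.
Qed.

Lemma denominator_mx (F : numFieldType) m n (M : 'M[rat]_(m, n)) :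
  exists2 k : nat, (0 < k)%N & exists Z : 'M[int]_(m, n),
    k%:R *: map_mx (@ratr F) M = map_mx (fun z : int => z%:~R) Z.
Proof.
pose den (p : 'I_m * 'I_n) := `|denq (M p.1 p.2)|%N.
have den_gt0 p : (0 < den p)%N by rewrite absz_gt0 denq_neq0.
exists (\prod_p den p)%N; first exact: prodn_gt0.
exists (\matrix_(i, j) (((\prod_p den p) %/ den (i, j))%N%:Z * numq (M i j))).
apply/matrixP => i j; rewrite !mxE.
have /divnK {1}<- : (den (i, j) %| \prod_p den p)%N by rewrite (bigD1 (i, j)) ?dvdn_mulr.
have den_ij : (den (i, j))%:Z = denq (M i j) by rewrite gtz0_abs ?denq_gt0.
rewrite natrM intrM -mulrA; congr (_ * _).
rewrite -[(den (i, j))%:R]/((den (i, j))%:Z%:~R : F) den_ij /ratr mulrC divfK //.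
by rewrite intr_eq0 denq_neq0.
Qed.

Section RationalIn.
Variables (R : realType) (d : nat) (B : 'M[R]_d).
Hypothesis B_unit : B \in unitmx.
Implicit Types (L : 'M[R]_d) (x : 'cV[R]_d).

Definition rational_in L := exists Q : 'M[rat]_d, L *m B = B *m map_mx ratr Q.

Lemma rational_inM L1 L2 : rational_in L1 -> rational_in L2 -> rational_in (L1 *m L2).
Proof.
move=> [Q1 HQ1] [Q2 HQ2]; exists (Q1 *m Q2).
by rewrite -mulmxA HQ2 mulmxA HQ1 map_mxM mulmxA.
Qed.

Lemma rational_inV L : L \in unitmx -> rational_in L -> rational_in (invmx L).
Proof.
move=> L_unit [Q HQ].
have Q_unit : map_mx (@ratr R) Q \in unitmx.
  by move: (unitmx_mul L B); rewrite HQ L_unit B_unit unitmx_mul => /andP[].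
exists (invmx Q); rewrite map_invmx.
by rewrite -{1}(mulmxK Q_unit B) -HQ -!mulmxA mulKmx.
Qed.

Lemma rational_inZ L (r : rat) : rational_in L -> rational_in (ratr r *: L).
Proof.
move=> [Q HQ]; exists (r *: Q); rewrite -scalemxAl HQ scalemxAr; congr (_ *m _).
by apply/matrixP => i j; rewrite !mxE rmorphM.
Qed.

Lemma rational_inZE L (r : rat) : r != 0 -> rational_in (ratr r *: L) <-> rational_in L.
Proof.
move=> r0; split; last exact: rational_inZ.
move=> /(rational_inZ r^-1); rewrite scalerA -rmorphM /= mulVf //.
by rewrite rmorph1 scale1r.
Qed.

Lemma det_rational_in L : rational_in L -> exists q : rat, \det L = ratr q.
Proof.
move=> [Q /(congr1 determinant)]; rewrite !det_mulmx det_map_mx [RHS]mulrC => HQ.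
have detB0 : \det B != 0 by rewrite -unitfE -unitmxE.
by exists (\det Q); apply: (mulIf detB0).
Qed.

Lemma rational_in_lattice_of L : rational_in L ->
  exists2 m : nat, (0 < m)%N & forall x, lattice_of B x -> lattice_of B (m%:R *: (L *m x)).
Proof.
move=> [Q HQ]; have [m m_gt0 [Z HZ]] := denominator_mx R Q.
exists m => // _ [z ->]; exists (Z *m z).
by rewrite map_mxM -HZ mulmxA HQ scalemxAl scalemxAr mulmxA.
Qed.

Lemma rational_in_of_finite_index L :
    finite_index (lattice_of B `&` lattice_of (L *m B)) (lattice_of (L *m B)) ->
  rational_in L.
Proof.
move=> Hfin.
have [Q HQ] : exists Q : 'M[rat]_d, invmx B *m (L *m B) = map_mx ratr Q.
  apply: rat_mx_of_col_multiples => j.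
  have HB a b : (lattice_of B `&` lattice_of (L *m B)) a ->
      (lattice_of B `&` lattice_of (L *m B)) b ->
      (lattice_of B `&` lattice_of (L *m B)) (a - b).
    by move=> [? ?] [? ?]; split; apply: lattice_ofB.
  have [|c c0 [[w Hw] _]] := finite_index_intZ (x := L *m B *m delta_mx j 0) HB Hfin.
    by move=> n; apply/lattice_of_natZ/lattice_of_delta.
  by exists c => //; exists w; rewrite colE -mulmxA scalemxAr Hw mulKmx.
by exists Q; rewrite -HQ mulKVmx.
Qed.

Lemma commensurate_of_rational_in L : L \in unitmx -> rational_in L ->
  commensurate (lattice_of B) (lattice_of (L *m B)).
Proof.
move=> L_unit L_rat.
have [m1 m1_gt0 HL] := rational_in_lattice_of L_rat.
have [m2 m2_gt0 HLV] := rational_in_lattice_of (rational_inV L_unit L_rat).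
have m_gt0 : (0 < m1 * m2)%N by rewrite muln_gt0 m1_gt0.
split; apply: (finite_index_lattice_of m_gt0) => x Hx; split.
- exact: lattice_of_natZ.
- rewrite -lattice_of_image; exists (m1%:R *: (m2%:R *: (invmx L *m x))).
    by apply: lattice_of_natZ; apply: HLV.
  by rewrite -!scalemxAr mulKVmx // scalerA natrM.
- move: Hx; rewrite -lattice_of_image => -[y Hy <-].
  by rewrite natrM mulrC -scalerA; apply: lattice_of_natZ; apply: HL.
- exact: lattice_of_natZ.
Qed.

Lemma commensurate_imageE L : L \in unitmx ->
  commensurate (lattice_of B) ((fun x => L *m x) @` lattice_of B) <-> rational_in L.
Proof.
move=> L_unit; rewrite lattice_of_image.
split=> [[_]|]; [exact: rational_in_of_finite_index | exact: commensurate_of_rational_in].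
Qed.

End RationalIn.

Section SpecialOrthogonal.
Variables (R : realType) (d : nat).
Implicit Types A C : 'M[R]_d.

Lemma is_SO_unit A : is_SO A -> A \in unitmx.
Proof. by case=> _ detA; rewrite unitmxE detA unitr1. Qed.

Lemma is_SO_mul A C : is_SO A -> is_SO C -> is_SO (A *m C).
Proof.
move=> [HA detA] [HC detC]; split; last by rewrite det_mulmx detA detC mulr1.
by rewrite trmx_mul mulmxA -(mulmxA C^T) HA mulmx1 HC.
Qed.

Lemma is_SO_invmx A : is_SO A -> is_SO (invmx A).
Proof.
move=> SO_A; have A_unit := is_SO_unit SO_A; case: SO_A => HA detA.
have -> : invmx A = A^T by rewrite -[invmx A]mul1mx -HA -mulmxA mulmxV ?mulmx1.
by split; [rewrite trmxK; apply: mulmx1C | rewrite det_tr].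
Qed.

Lemma is_SO_norm A (v : 'cV[R]_d) : is_SO A -> (A *m v)^T *m (A *m v) = v^T *m v.
Proof. by case=> HA _; rewrite trmx_mul mulmxA -(mulmxA v^T) HA mulmx1. Qed.

End SpecialOrthogonal.

Lemma trmx_mul_self_eq0 (R : realDomainType) n (v : 'cV[R]_n) :
  ((v^T *m v) 0 0 == 0) = (v == 0).
Proof.
apply/eqP/eqP => [|->]; last by rewrite mulmx0 mxE.
rewrite mxE => /eqP; rewrite psumr_eq0 => [/allP v0|i _]; last first.
  by rewrite mxE -expr2 sqr_ge0.
apply/matrixP => i j; rewrite (ord1 j) !mxE.
have /implyP/(_ isT) := v0 i (mem_index_enum i).
by rewrite mxE mulf_eq0 orbb => /eqP.
Qed.

Lemma ratr_of_odd_power (F : numFieldType) (a : F) (k : nat) (r s : rat) :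
  r != 0 -> a ^+ 2 = ratr r -> a ^+ k.*2.+1 = ratr s -> a = ratr (s / r ^+ k).
Proof.
move=> r0 a2 ak; rewrite rmorphM fmorphV rmorphXn /= -a2 -ak -mul2n exprS exprM mulfK //.
by rewrite expf_neq0 // a2 fmorph_eq0.
Qed.

Lemma commutatorZ (F : fieldType) n (a c : F) (X Y : 'M[F]_n) :
  a != 0 -> c != 0 -> X \in unitmx -> Y \in unitmx ->
  (a *: X) *m (c *: Y) *m invmx (a *: X) *m invmx (c *: Y) = X *m Y *m invmx X *m invmx Y.
Proof.
move=> a0 c0 X_unit Y_unit.
rewrite !invmxZ ?unitmxZ ?unitfE // -!scalemxAl -!scalemxAr -!scalemxAl !scalerA.
suff -> : a * (c^-1 / a * c) = 1 by rewrite scale1r.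
by field; apply/andP.
Qed.

Section LatticeSO.
Variables (R : realType) (d : nat) (B : 'M[R]_d).
Hypotheses (d_gt0 : (0 < d)%N) (B_unit : B \in unitmx).
Hypothesis norms_rat : rational_norms (lattice_of B).
Implicit Types A C : 'M[R]_d.

Lemma SOC_lattice_ofE A : SOC (lattice_of B) A <-> is_SO A /\ rational_in B A.
Proof.
split=> -[SO_A HA]; split => //; first exact/(commensurate_imageE B_unit (is_SO_unit SO_A)).
exact/(commensurate_imageE B_unit (is_SO_unit SO_A)).
Qed.

Lemma SOS_lattice_ofE A :
  SOS (lattice_of B) A <-> is_SO A /\ exists2 a : R, 0 < a & rational_in B (a *: A).
Proof.
have imageZ a : (fun x => a *: (A *m x)) @` lattice_of B = (fun x => (a *: A) *m x) @` lattice_of B.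
  by congr (_ @` _); apply: funext => x; rewrite scalemxAl.
have aA_unit a : is_SO A -> 0 < a -> a *: A \in unitmx.
  by move=> SO_A a_gt0; rewrite unitmxZ ?unitfE ?gt_eqF ?is_SO_unit.
split=> -[SO_A [a a_gt0 HA]]; split => //; exists a => //; rewrite ?imageZ in HA *.
  exact/(commensurate_imageE B_unit (aA_unit a SO_A a_gt0)).
exact/(commensurate_imageE B_unit (aA_unit a SO_A a_gt0)).
Qed.

(* Compare the rational squared norms of a basis vector [x] of the lattice and
   of the lattice vector [m a A x]; they differ by the factor [(m a)^2]. *)
Lemma sqr_scale_rational A a : is_SO A -> a != 0 -> rational_in B (a *: A) ->
  exists2 r : rat, r != 0 & a ^+ 2 = ratr r.
Proof.
move=> SO_A a0 HA; have [m m_gt0 Hm] := rational_in_lattice_of HA.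
pose x : 'cV[R]_d := B *m delta_mx (Ordinal d_gt0) 0.
have Hx : lattice_of B x := lattice_of_delta B (Ordinal d_gt0).
have [qx Hqx] := norms_rat Hx; have [qy Hqy] := norms_rat (Hm _ Hx).
have Hy : m%:R *: (a *: A *m x) = (m%:R * a) *: (A *m x) by rewrite -scalemxAl scalerA.
rewrite Hy !linearZ /= -scalemxAl linearZ /= is_SO_norm // scalerA mxE in Hqy.
have nx0 : (x^T *m x) 0 0 != 0.
  rewrite trmx_mul_self_eq0; apply: contraTneq isT => /(congr1 (mulmx (invmx B))).
  rewrite mulKmx // mulmx0 => /matrixP /(_ (Ordinal d_gt0) 0); rewrite !mxE !eqxx /=.
  by move/eqP; rewrite oner_eq0.
have m0 : (m%:R : R) != 0 by rewrite pnatr_eq0 -lt0n.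
have a2 : a ^+ 2 = ratr (qy / (m%:R ^+ 2 * qx)).
  rewrite rmorphM fmorphV rmorphM rmorphXn /= ratr_nat -Hqy -Hqx.
  by field; rewrite nx0 m0.
exists (qy / (m%:R ^+ 2 * qx)) => //.
by apply/eqP => q0; move: a2; rewrite q0 rmorph0 => /eqP; rewrite expf_eq0 (negbTE a0).
Qed.

Lemma SOS_sqr_SOC A : SOS (lattice_of B) A -> SOC (lattice_of B) (A *m A).
Proof.
move=> /SOS_lattice_ofE [SO_A [a a_gt0 HA]]; apply/SOC_lattice_ofE; split; first exact: is_SO_mul.
have [r r0 a2] := sqr_scale_rational SO_A (lt0r_neq0 a_gt0) HA.
apply/(rational_inZE _ _ r0); rewrite -a2 expr2 -scalerA scalemxAl scalemxAr.
exact: rational_inM.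
Qed.

Lemma SOS_commutator_SOC A C : SOS (lattice_of B) A -> SOS (lattice_of B) C ->
  SOC (lattice_of B) (A *m C *m invmx A *m invmx C).
Proof.
move=> /SOS_lattice_ofE [SO_A [a a_gt0 HA]] /SOS_lattice_ofE [SO_C [c c_gt0 HC]].
apply/SOC_lattice_ofE; split.
  by do !apply: is_SO_mul => //; apply: is_SO_invmx.
have aA_unit : a *: A \in unitmx by rewrite unitmxZ ?unitfE ?gt_eqF ?is_SO_unit.
have cC_unit : c *: C \in unitmx by rewrite unitmxZ ?unitfE ?gt_eqF ?is_SO_unit.
rewrite -(commutatorZ (lt0r_neq0 a_gt0) (lt0r_neq0 c_gt0)) ?is_SO_unit //.
by do !apply: rational_inM => //; apply: rational_inV.
Qed.

(* For odd [d], [a^d = det (a A)] and [a^2] are rational, hence so is [a]. *)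
Lemma SOS_odd_SOC A : odd d -> SOS (lattice_of B) A -> SOC (lattice_of B) A.
Proof.
move=> d_odd /SOS_lattice_ofE [SO_A [a a_gt0 HA]]; apply/SOC_lattice_ofE; split => //.
have [r r0 a2] := sqr_scale_rational SO_A (lt0r_neq0 a_gt0) HA.
have [s detA] := det_rational_in B_unit HA.
rewrite detZ SO_A.2 mulr1 -[d]odd_double_half d_odd in detA.
have s0 : s / r ^+ d./2 != 0.
  by apply: contra_neq (lt0r_neq0 a_gt0) => s0; rewrite (ratr_of_odd_power r0 a2 detA) s0 rmorph0.
by apply/(rational_inZE _ _ s0); rewrite -(ratr_of_odd_power r0 a2 detA).
Qed.

End LatticeSO.

Lemma SOC_sub_SOS (R : realType) d (G : set 'cV[R]_d) A : SOC G A -> SOS G A.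
Proof.
move=> [SO_A HA]; split => //; exists 1 => //.
by congr (commensurate _ (_ @` _)): HA; apply: funext => x; rewrite scale1r.
Qed.

Theorem mainTheorem5 (R : realType) (d : nat) (G : set 'cV[R]_d) :
  (2 <= d)%N -> is_lattice G -> rational_norms G ->
  [/\ (~~ odd d -> quot_elem_abelian2 (SOC G) (SOS G)),
      (odd d -> SOS G = SOC G) &
      (forall A, SOS G A -> SOC G (A *m A))].
Proof.
move=> d_ge2 [B [B_unit ->]] norms_rat; have d_gt0 : (0 < d)%N by apply: ltnW.
split=> [_ A C HA HC | d_odd | A]; last exact: SOS_sqr_SOC.
  by split; [apply: SOS_commutator_SOC | apply: SOS_sqr_SOC].
apply/seteqP; split=> A; first exact: SOS_odd_SOC.
exact: SOC_sub_SOS.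
Qed.
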